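(* $NQC(HAM_n^{n/2})=O(\log n)$.
   Context: For even $n$ and $x,y\in\{0,1\}^n$, $HAM^t_n(x,y)=1$ iff $\sum_{i=1}^n(x_i\oplus y_i)\neq t$. Quantum communication model (Yao, no prior entanglement): Alice receives $x$, Bob $y$; each holds private qubits initialized to the input and $|0\rangle$; in each round one player applies a unitary to his qubits and sends one qubit; at the end a qubit is measured giving the output; the cost is the number of qubits exchanged. A nondeterministic quantum protocol for a Boolean $f$ rejects every input in $f^{-1}(0)$ with certainty and accepts every other input with positive probability; $NQC(f)$ is the minimum cost of such a protocol. *)

From mathcomp Require Import all_boot all_algebra.
From mathcomp Require Import complex Rstruct.
Set Implicit Arguments. Unset Strict Implicit. Unset Printing Implicit Defensive.
Import GRing.Theory Num.Theory.
Local Open Scope ring_scope.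

Definition CC := (Rdefinitions.R)[i].

Definition hamdist (n : nat) (x y : 'I_n -> bool) : nat :=
  (\sum_(i < n) (x i (+) y i : nat))%N.
Definition HAM (n t : nat) (x y : 'I_n -> bool) : bool := hamdist x y != t.

Definition basis (m : nat) := {ffun 'I_m -> bool}.
(** Operators and states on (C^2)^{⊗m}, as matrices/vectors indexed by basis. *)
Definition op (m : nat) := basis m -> basis m -> CC.
Definition qstate (m : nat) := basis m -> CC.

Definition apply_op m (U : op m) (psi : qstate m) : qstate m :=
  fun i => \sum_(j : basis m) U i j * psi j.

Definition unitary m (U : op m) : Prop :=
  forall i j : basis m, \sum_(k : basis m) U i k * (U j k)^* = (i == j)%:R.

Definition agree_off m (S : pred 'I_m) (i j : basis m) : bool :=
  [forall k, (k \notin S) ==> (i k == j k)].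
Definition agree_on m (S : pred 'I_m) (i j : basis m) : bool :=
  [forall k, (k \in S) ==> (i k == j k)].

(** U acts only on the qubits in S, i.e. U = u_S ⊗ Id_{complement of S}. *)
Definition local_op m (S : pred 'I_m) (U : op m) : Prop :=
  (forall i j, ~~ agree_off S i j -> U i j = 0) /\
  (forall i j i' j', agree_off S i j -> agree_off S i' j' ->
      agree_on S i i' -> agree_on S j j' -> U i j = U i' j').

(** A quantum communication protocol (Yao model, no entanglement) on inputs
    x, y in {0,1}^n.  The whole system consists of qm qubits; owner qubits
    (true = Alice, false = Bob).  Alice's input is loaded into the qubits
    xpos i, Bob's into the qubits ypos j, all other qubits start in |0>.
    Round t < rounds: player speaker t applies the unitary U t acting only on
    the qubits he currently owns, then sends his qubit sent t to the other
    player.  At the end qubit out is measured; outcome 1 = accept. *)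
Arguments op : clear implicits.
Record qprotocol (n : nat) := QProtocol {
  qm : nat;
  rounds : nat;
  own0 : 'I_qm -> bool;
  xpos : 'I_n -> 'I_qm;
  ypos : 'I_n -> 'I_qm;
  speaker : nat -> bool;
  sent : nat -> 'I_qm;
  U : nat -> op qm;
  out : 'I_qm }.
Arguments qm {n}. Arguments rounds {n}. Arguments own0 {n} _ _. Arguments xpos {n} _ _.
Arguments ypos {n} _ _. Arguments speaker {n} _ _. Arguments sent {n} _ _.
Arguments U {n} _ _ _ _. Arguments out {n}.

Section Protocol.
Variables (n : nat) (P : qprotocol n).

Fixpoint owner (t : nat) : 'I_(qm P) -> bool :=
  match t with
  | 0 => own0 P
  | t'.+1 => fun k => if k == sent P t' then ~~ owner t' k else owner t' k
  end.

Definition valid_protocol : Prop :=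
  [/\ injective (xpos P), injective (ypos P),
      (forall i, own0 P (xpos P i) = true),
      (forall j, own0 P (ypos P j) = false) &
      (forall t, (t < rounds P)%N ->
         [/\ owner t (sent P t) = speaker P t,
             unitary (U P t) &
             local_op [pred k | owner t k == speaker P t] (U P t)])].

Definition init_basis (x y : 'I_n -> bool) : basis (qm P) :=
  [ffun k => [exists i, (xpos P i == k) && x i] ||
             [exists j, (ypos P j == k) && y j]].

Fixpoint run (x y : 'I_n -> bool) (t : nat) : qstate (qm P) :=
  match t with
  | 0 => fun b => (b == init_basis x y)%:R
  | t'.+1 => apply_op (U P t') (run x y t')
  end.

Definition accept_prob (x y : 'I_n -> bool) : CC :=
  \sum_(b : basis (qm P) | b (out P)) `|run x y (rounds P) b| ^+ 2.

(** cost = number of qubits exchanged = number of rounds *)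
Definition cost : nat := rounds P.

Definition nondet_computes (f : ('I_n -> bool) -> ('I_n -> bool) -> bool) : Prop :=
  valid_protocol /\
  forall x y, (f x y = false -> accept_prob x y = 0) /\
              (f x y = true -> 0 < accept_prob x y).
End Protocol.

Definition NQC_le (n : nat) (f : ('I_n -> bool) -> ('I_n -> bool) -> bool) (c : nat) : Prop :=
  exists P : qprotocol n, nondet_computes P f /\ (cost P <= c)%N.

From mathcomp Require Import all_boot all_algebra complex Rstruct ring zify.
Set Implicit Arguments. Unset Strict Implicit. Unset Printing Implicit Defensive.
Import GRing.Theory Num.Theory.
Local Open Scope ring_scope.

(* Alice puts a register of k = O(log n) qubits in the uniform superposition of the
   values v < 2^k, multiplies the amplitude of v by (-1)^(x_v) and sends the register
   to Bob, who multiplies by (-1)^(y_v), undoes the Hadamard transform and flags the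
   outcome "register = 0" on an output qubit.  The amplitude of that outcome is
   proportional to sum_v (-1)^(x_v + y_v) = n - 2 d(x, y), where the register values
   v >= n carry alternating signs and contribute 0 because n and 2^k are even.  Hence
   the protocol accepts with positive probability iff d(x, y) <> n/2, and it exchanges
   k + 1 qubits. *)

Lemma sum_sign_nat_even (R : pzRingType) a b : ~~ odd a -> ~~ odd b -> (a <= b)%N ->
  \sum_(a <= v < b) (-1) ^+ v = 0 :> R.
Proof.
move=> ev_a ev_b le_ab; have ev_ba : ~~ odd (b - a) by rewrite oddB // (negbTE ev_a) addbF.
rewrite -(subnKC le_ab) -(odd_double_half (b - a)) (negbTE ev_ba) add0n.
elim: (b - a)./2 => [|l IHl]; first by rewrite addn0 big_geq.
rewrite doubleS !addnS !big_nat_recr ?leqW ?leq_addr //= IHl add0r.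
by rewrite [_ ^+ _.+1]exprS mulN1r addrN.
Qed.

Definition idop {m} : op m := fun i j => (i == j)%:R.

Section Agreement.
Variable m : nat.
Implicit Types (S T : pred 'I_m) (i j l : basis m).

Lemma agree_offP S i j : reflect (forall q, q \notin S -> i q = j q) (agree_off S i j).
Proof.
apply: (iffP forallP) => [agr q qS | agr q]; first by apply/eqP; rewrite (implyP (agr q)).
by apply/implyP => /agr ->.
Qed.

Lemma agree_onP S i j : reflect (forall q, q \in S -> i q = j q) (agree_on S i j).
Proof.
apply: (iffP forallP) => [agr q qS | agr q]; first by apply/eqP; rewrite (implyP (agr q)).
by apply/implyP => /agr ->.
Qed.

Lemma agree_off_refl S i : agree_off S i i.
Proof. by apply/agree_offP. Qed.

Lemma agree_offC S i j : agree_off S i j = agree_off S j i.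
Proof. by apply/agree_offP/agree_offP => agr q /agr. Qed.

Lemma agree_off_trans S j i l : agree_off S i j -> agree_off S j l -> agree_off S i l.
Proof. by move=> /agree_offP ij /agree_offP jl; apply/agree_offP => q qS; rewrite ij ?jl. Qed.

Lemma agree_offS S T i j : {subset S <= T} -> agree_off S i j -> agree_off T i j.
Proof. by move=> sST /agree_offP agr; apply/agree_offP => q /(contra (sST q)) /agr. Qed.

Lemma agree_off0 i j : agree_off pred0 i j = (i == j).
Proof.
apply/agree_offP/eqP => [agr | -> //]; first by apply/ffunP => q; apply: agr.
Qed.

End Agreement.

Section LocalOperators.
Variable m : nat.
Implicit Types (S T : pred 'I_m) (i j : basis m).

Lemma local_op_eq S T (U : op m) : S =1 T -> local_op T U -> local_op S U.
Proof.
move=> eST [U_off U_on].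
have eq_off i j : agree_off S i j = agree_off T i j.
  by apply: eq_forallb => q; rewrite !unfold_in eST.
have eq_on i j : agree_on S i j = agree_on T i j.
  by apply: eq_forallb => q; rewrite !unfold_in eST.
by split=> [i j | i j i' j']; rewrite ?eq_off ?eq_on; [apply: U_off | apply: U_on].
Qed.

(* The shape of every operator of the protocol: a relabelling [p] of basis states
   that only changes qubits of [S], followed by a transform of the qubits of [R]
   whose kernel [F] reads only qubits of [S]. *)
Lemma local_op_from S (R : pred 'I_m) (p : basis m -> basis m) (F : op m) (U : op m) :
  {subset R <= S} ->
  (forall i, agree_off S i (p i)) ->
  {homo p : i i' / agree_on S i i'} ->
  (forall i j i' j', agree_on S i i' -> agree_on S j j' -> F i j = F i' j') ->
  (forall i j, U i j = (agree_off R (p i) j)%:R * F i j) ->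
  local_op S U.
Proof.
move=> sRS p_off p_on F_on UE; split=> [i j | i j i' j' ij i'j' ii' jj']; rewrite !UE.
  apply: contraNeq => U_neq0; apply: agree_off_trans (p_off i) _; apply: agree_offS sRS _.
  by case: (agree_off R (p i) j) U_neq0; rewrite ?mul0r ?eqxx.
rewrite (F_on _ _ _ _ ii' jj'); congr ((nat_of_bool _)%:R * _); apply: eq_forallb => q.
move/agree_onP: (p_on _ _ ii') => pii'; move/agree_onP: jj' => {}jj'.
case qS: (q \in S); first by rewrite pii' ?jj'.
have qR : q \notin R by apply: contraFN qS; apply: sRS.
move/agree_offP in ij; move/agree_offP in i'j'.
move/agree_offP: (p_off i) => pi; move/agree_offP: (p_off i') => pi'.
by rewrite qR -pi ?qS // -pi' ?qS // ij ?qS // i'j' ?qS // !eqxx.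
Qed.

Lemma local_op_id S : local_op S idop.
Proof.
apply: (@local_op_from S pred0 id (fun _ _ => 1)) => // [i | i j].
  exact: agree_off_refl.
by rewrite agree_off0 mulr1.
Qed.

End LocalOperators.

Section Unitaries.
Variable m : nat.
Implicit Types (i j : basis m).

Lemma sumr_indicator (P : pred (basis m)) (F : basis m -> CC) :
  \sum_q (P q)%:R * F q = \sum_(q | P q) F q.
Proof. by rewrite [RHS]big_mkcond; apply: eq_bigr => q _; case: (P q); rewrite ?mul1r ?mul0r. Qed.

Lemma sum_delta (F : basis m -> CC) b : \sum_q (q == b)%:R * F q = F b.
Proof. by rewrite sumr_indicator big_pred1_eq. Qed.

Lemma apply_op_id (psi : qstate m) : apply_op idop psi =1 psi.
Proof. by move=> b; rewrite /apply_op /idop; under eq_bigr do rewrite eq_sym; apply: sum_delta. Qed.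

Lemma unitary_id : unitary (@idop m).
Proof.
move=> i j; rewrite (eq_bigr (fun q => (q == j)%:R * (i == q)%:R)).
  by rewrite sum_delta.
by move=> q _; rewrite conjC_nat mulrC eq_sym.
Qed.

Lemma unitary_phase_l (d : basis m -> CC) (U : op m) :
  (forall i, `|d i| = 1) -> unitary U -> unitary (fun i j => d i * U i j).
Proof.
move=> d1 unitU i j.
under eq_bigr do rewrite rmorphM mulrACA.
rewrite -mulr_sumr unitU; have [-> | _] := eqVneq i j; last by rewrite mulr0.
by rewrite -normCK d1 expr1n mulr1.
Qed.

Lemma unitary_phase_r (d : basis m -> CC) (U : op m) :
  (forall j, `|d j| = 1) -> unitary U -> unitary (fun i j => U i j * d j).
Proof.
move=> d1 unitU i j; rewrite -unitU; apply: eq_bigr => q _.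
by rewrite rmorphM mulrACA -normCK d1 expr1n mulr1.
Qed.

Lemma unitary_perm_l (p : basis m -> basis m) (U : op m) :
  injective p -> unitary U -> unitary (fun i j => U (p i) j).
Proof. by move=> p_inj unitU i j; rewrite unitU (inj_eq p_inj). Qed.

Lemma apply_op_delta (U : op m) b : apply_op U (fun q => (q == b)%:R) =1 U^~ b.
Proof. by move=> i; rewrite /apply_op; under eq_bigr do rewrite mulrC; apply: sum_delta. Qed.

End Unitaries.

Section Walsh.
Variable k : nat.
Implicit Types a b g : {ffun 'I_k -> bool}.

Definition walsh a g : CC := \prod_(r < k) (-1) ^+ (a r && g r).

Lemma walshC a g : walsh a g = walsh g a.
Proof. by apply: eq_bigr => r _; rewrite andbC. Qed.

Lemma walsh0 g : walsh [ffun=> false] g = 1.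
Proof. by apply: big1 => r _; rewrite ffunE. Qed.

Lemma conj_walsh a g : (walsh a g)^* = walsh a g.
Proof. by rewrite rmorph_prod; apply: eq_bigr => r _; rewrite rmorph_sign. Qed.

Lemma walshM a b g : walsh a g * walsh b g = walsh [ffun r => a r (+) b r] g.
Proof.
rewrite -big_split; apply: eq_bigr => r _ /=; rewrite ffunE -signr_addb.
by case: (g r); rewrite ?andbT ?andbF.
Qed.

Lemma sum_walsh a : \sum_g walsh a g = (a == [ffun=> false])%:R * (2 ^ k)%:R.
Proof.
rewrite -(bigA_distr_bigA (fun r (b : bool) => (-1) ^+ (a r && b) : CC)) /=.
under eq_bigr do rewrite big_bool /= andbT andbF expr0.
have [-> | /eqP a_neq0] := eqVneq a [ffun=> false].
  rewrite mul1r natrX -[in RHS](card_ord k) -prodr_const.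
  by apply: eq_bigr => r _; rewrite ffunE.
have [r0 ar0] : exists r0, a r0.
  apply/existsP; apply: contra_notT a_neq0 => /existsPn a0.
  by apply/ffunP => r; rewrite ffunE; apply/negbTE.
by rewrite (bigD1 r0) //= ar0 addNr mul0r mul0r.
Qed.

Lemma sum_walshM a b : \sum_g walsh a g * walsh b g = (a == b)%:R * (2 ^ k)%:R.
Proof.
under eq_bigr do rewrite walshM.
rewrite sum_walsh.
congr ((nat_of_bool _)%:R * _); apply/eqP/eqP => [ab0 | ->].
  by apply/ffunP => r; move/ffunP/(_ r): ab0; rewrite !ffunE => /negbT; rewrite negb_add => /eqP.
by apply/ffunP => r; rewrite !ffunE addbb.
Qed.

End Walsh.

Section Register.
Variables (m k : nat) (le_km : (k <= m)%N).
Implicit Types (g : {ffun 'I_k -> bool}) (b i j : basis m).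

Definition in_reg : pred 'I_m := fun q => (q < k)%N.

Definition reg_of j : {ffun 'I_k -> bool} := [ffun r => j (widen_ord le_km r)].

Definition with_reg g b : basis m :=
  [ffun q => if insub (val q) : option 'I_k is Some r then g r else b q].

Lemma reg_of_with_reg g b : reg_of (with_reg g b) = g.
Proof.
apply/ffunP => r; rewrite !ffunE /=.
by case: insubP => [r' _ /val_inj -> // | ]; rewrite ltn_ord.
Qed.

Lemma with_reg_out g b (q : 'I_m) : (k <= q)%N -> with_reg g b q = b q.
Proof. by rewrite ffunE; case: insubP => // r /= lt_qk _ /leq_gtF; rewrite lt_qk. Qed.

Lemma agree_off_with_reg g b : agree_off in_reg b (with_reg g b).
Proof. by apply/agree_offP => q; rewrite unfold_in -leqNgt => /with_reg_out ->. Qed.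

Lemma with_reg_of b j : agree_off in_reg b j -> with_reg (reg_of j) b = j.
Proof.
move/agree_offP => bj; apply/ffunP => q; rewrite ffunE.
case: insubP => [r _ qr | ]; last by move=> q_out; apply: bj; rewrite unfold_in.
by rewrite ffunE; congr (j _); apply: val_inj; rewrite /= qr.
Qed.

Lemma agree_off_reg_inj i j : agree_off in_reg i j -> reg_of i = reg_of j -> i = j.
Proof.
by move=> ij ri; rewrite -(with_reg_of ij) -ri with_reg_of // agree_off_refl.
Qed.

Lemma reg_of_agree_on (S : pred 'I_m) i j :
  {subset in_reg <= S} -> agree_on S i j -> reg_of i = reg_of j.
Proof.
move=> sRS /agree_onP ij; apply/ffunP => r; rewrite !ffunE; apply/ij/sRS.
by rewrite unfold_in /= ltn_ord.
Qed.

Lemma sum_agree_off_reg (F : basis m -> CC) b :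
  \sum_(j | agree_off in_reg b j) F j = \sum_g F (with_reg g b).
Proof.
rewrite (reindex (with_reg^~ b)) /=; last first.
  by exists reg_of => [g _ | j /with_reg_of //]; rewrite reg_of_with_reg.
by apply: eq_bigl => g; rewrite agree_off_with_reg.
Qed.

Definition hadamard (c : CC) i j : CC :=
  (agree_off in_reg i j)%:R * c * walsh (reg_of i) (reg_of j).

Lemma hadamard_unitary c : c * c^* * (2 ^ k)%:R = 1 -> unitary (hadamard c).
Proof.
move=> c_norm i j; have [ij | nij] := boolP (agree_off in_reg i j); last first.
  rewrite big1 => [|q _]; first by case: eqP nij => // ->; rewrite agree_off_refl.
  rewrite /hadamard !rmorphM rmorph_nat.
  case iq: (agree_off in_reg i q); case jq: (agree_off in_reg j q); rewrite ?mul0r ?mulr0 //.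
  by move: nij; rewrite (agree_off_trans iq) // agree_offC.
have jq q : agree_off in_reg j q = agree_off in_reg i q.
  by apply/idP/idP; apply: agree_off_trans; rewrite // agree_offC.
rewrite (eq_bigr (fun q => (agree_off in_reg i q)%:R *
    (c * c^* * (walsh (reg_of i) (reg_of q) * walsh (reg_of j) (reg_of q))))); last first.
  move=> q _; rewrite /hadamard jq !rmorphM /= rmorph_nat conj_walsh.
  by case: (agree_off _ i q); rewrite ?mul0r ?mul1r //; ring.
rewrite sumr_indicator sum_agree_off_reg -mulr_sumr.
under eq_bigr do rewrite reg_of_with_reg.
rewrite sum_walshM mulrCA c_norm mulr1; congr ((nat_of_bool _)%:R).
by apply/eqP/eqP => [/(agree_off_reg_inj ij) | -> //].
Qed.

Lemma hadamard_reg0l c i j :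
  reg_of i = [ffun=> false] -> hadamard c i j = (agree_off in_reg i j)%:R * c.
Proof. by move=> i0; rewrite /hadamard i0 walsh0 mulr1. Qed.

Lemma hadamard_reg0r c i j :
  reg_of j = [ffun=> false] -> hadamard c i j = (agree_off in_reg i j)%:R * c.
Proof. by move=> j0; rewrite /hadamard j0 walshC walsh0 mulr1. Qed.

End Register.

Section InitialState.
Variables (n : nat) (P : qprotocol n).
Hypothesis P_valid : valid_protocol P.
Variables x y : 'I_n -> bool.

Lemma xpos_neq_ypos i j : xpos P i != ypos P j.
Proof.
by case: P_valid => _ _ xA yB _; apply/eqP => xy; move: (xA i); rewrite xy yB.
Qed.

Lemma init_basis_xpos i : init_basis P x y (xpos P i) = x i.
Proof.
have [xinj _ _ _ _] := P_valid; rewrite ffunE.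
have -> : [exists j, (ypos P j == xpos P i) && y j] = false.
  by apply/existsP => -[j /andP[/eqP yx _]]; move: (xpos_neq_ypos i j); rewrite yx eqxx.
rewrite orbF; apply/existsP/idP => [[i' /andP[/eqP /xinj -> //]] | xi].
by exists i; rewrite eqxx.
Qed.

Lemma init_basis_ypos j : init_basis P x y (ypos P j) = y j.
Proof.
have [_ yinj _ _ _] := P_valid; rewrite ffunE.
have -> : [exists i, (xpos P i == ypos P j) && x i] = false.
  by apply/existsP => -[i /andP[xy _]]; move: (xpos_neq_ypos i j); rewrite xy.
apply/existsP/idP => [[j' /andP[/eqP /yinj -> //]] | yj].
by exists j; rewrite eqxx.
Qed.

Lemma init_basis_idle q :
  (forall i, xpos P i != q) -> (forall j, ypos P j != q) -> init_basis P x y q = false.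
Proof.
move=> xq yq; rewrite ffunE.
by apply/norP; split; apply/existsP => -[i /andP[/eqP iq _]]; [move: (xq i) | move: (yq i)];
  rewrite iq eqxx.
Qed.

End InitialState.

(* Qubit layout: the register 0 .. k-1, Alice's input k .. k+n-1, Bob's input
   k+n .. k+2n-1 and the output qubit k+2n.  The register has even size k = 2h so
   that the normalisation 2^(-k/2) of the Hadamard transform is the rational 2^(-h). *)
Section HammingProtocol.
Variables (n h : nat).
Local Notation k := h.*2.
Local Notation m := (h.*2 + n + n).+1.
Local Notation outq := (@ord_max (h.*2 + n + n)).

Lemma reg_fits : (k <= m)%N. Proof. lia. Qed.
Local Notation in_reg := (@in_reg m k).
Local Notation reg := (reg_of reg_fits).

Definition xqubit (i : 'I_n) : 'I_m := inord (k + i).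
Definition yqubit (i : 'I_n) : 'I_m := inord (k + n + i).

Lemma xqubitE i : val (xqubit i) = (k + i)%N.
Proof. by apply/inordK; have := ltn_ord i; lia. Qed.
Lemma yqubitE i : val (yqubit i) = (k + n + i)%N.
Proof. by apply/inordK; have := ltn_ord i; lia. Qed.

Definition alice_owns0 (q : 'I_m) : bool := (q < k + n)%N.
Definition alice_speaks (t : nat) : bool := (t < k)%N.
Definition sent_qubit (t : nat) : 'I_m := if (t < k)%N then inord t else outq.

Definition hscale : CC := (2 ^+ h)^-1.

Definition reg_index (j : basis m) : nat := enum_rank (reg j).

(* The register value v addresses input bit v; the values v >= n are padding. *)
Definition alice_bit (j : basis m) : bool :=
  if insub (reg_index j) : option 'I_n is Some i then j (xqubit i) else odd (reg_index j).
Definition bob_bit (j : basis m) : bool :=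
  if insub (reg_index j) : option 'I_n is Some i then j (yqubit i) else false.

(* Composed with the Hadamard transform, this records "register = 0" on the output. *)
Definition flip_out (j : basis m) : basis m :=
  [ffun q => if q == outq then j q (+) (reg j == [ffun=> false]) else j q].

Definition alice_op : op m := fun i j => (-1) ^+ alice_bit i * hadamard reg_fits hscale i j.
Definition bob_op : op m := fun i j => hadamard reg_fits hscale (flip_out i) j * (-1) ^+ bob_bit j.
Definition round_op (t : nat) : op m :=
  if t == 0%N then alice_op else if t == k then bob_op else idop.

Definition ham_protocol : qprotocol n :=
  @QProtocol n m k.+1 alice_owns0 xqubit yqubit alice_speaks sent_qubit round_op outq.

Lemma ham_protocol_cost : cost ham_protocol = k.+1.
Proof. by []. Qed.

Lemma hscale_neq0 : hscale != 0.
Proof. by rewrite invr_neq0 // expf_neq0 // pnatr_eq0. Qed.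

Lemma hscale_norm : hscale * hscale^* * (2 ^ k)%:R = 1.
Proof.
have hscale_real : hscale^* = hscale by rewrite /hscale fmorphV rmorphXn rmorph_nat.
by rewrite hscale_real /hscale -invfM -exprD addnn natrX mulVf // expf_neq0 // pnatr_eq0.
Qed.

Lemma reg_out_neq r : (widen_ord reg_fits r == outq) = false.
Proof. by apply/negbTE; rewrite -val_eqE /= neq_ltn; have := ltn_ord r; lia. Qed.

Lemma reg_flip_out j : reg (flip_out j) = reg j.
Proof. by apply/ffunP => r; rewrite !ffunE reg_out_neq. Qed.

Lemma flip_outK : involutive flip_out.
Proof.
move=> j; apply/ffunP => q; rewrite ffunE reg_flip_out ffunE.
by case: eqP => // _; rewrite -addbA addbb addbF.
Qed.

Lemma alice_op_unitary : unitary alice_op.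
Proof.
by apply: unitary_phase_l => [i|]; [exact: normr_sign | exact: hadamard_unitary hscale_norm].
Qed.

Lemma bob_op_unitary : unitary bob_op.
Proof.
apply: unitary_phase_r => [j|]; first exact: normr_sign.
exact: unitary_perm_l (inv_inj flip_outK) (hadamard_unitary _ hscale_norm).
Qed.

Lemma alice_op_local : local_op [pred q : 'I_m | (q < k + n)%N] alice_op.
Proof.
have sub : {subset in_reg <= [pred q : 'I_m | (q < k + n)%N]}.
  by move=> q; rewrite unfold_in inE /=; lia.
apply: (@local_op_from _ _ in_reg id
  (fun i j => (-1) ^+ alice_bit i * hscale * walsh (reg i) (reg j))) => //.
- by move=> i; apply: agree_off_refl.
- move=> i j i' j' ii' jj'; rewrite /alice_bit /reg_index.
  rewrite (reg_of_agree_on reg_fits sub ii') (reg_of_agree_on reg_fits sub jj').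
  case: insubP => // v _ _; move/agree_onP: ii' => -> //.
  by rewrite inE xqubitE ltn_add2l ltn_ord.
- by move=> i j; rewrite /alice_op /hadamard -!mulrA mulrCA.
Qed.

Lemma bob_op_local : local_op [pred q : 'I_m | (q < k)%N || (k + n <= q)%N] bob_op.
Proof.
set S := [pred q | _].
have sub : {subset in_reg <= S} by move=> q; rewrite unfold_in inE => ->.
have outS : outq \in S by rewrite inE /=; apply/orP; right; lia.
apply: (@local_op_from _ _ in_reg flip_out
  (fun i j => hscale * walsh (reg (flip_out i)) (reg j) * (-1) ^+ bob_bit j)) => //.
- move=> i; apply/agree_offP => q qS; rewrite ffunE; case: eqP => // qout.
  by move: qS; rewrite qout outS.
- move=> i i' ii'; apply/agree_onP => q qS; rewrite !ffunE (reg_of_agree_on reg_fits sub ii').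
  by move/agree_onP: ii' => ->.
- move=> i j i' j' ii' jj'; rewrite !reg_flip_out /bob_bit /reg_index.
  rewrite (reg_of_agree_on reg_fits sub ii') (reg_of_agree_on reg_fits sub jj').
  case: insubP => // v _ _; move/agree_onP: jj' => -> //.
  by rewrite inE yqubitE; apply/orP; right; lia.
- by move=> i j; rewrite /bob_op /hadamard -!mulrA.
Qed.

Hypothesis h_gt0 : (0 < h)%N.

Lemma k_gt0 : (0 < k)%N. Proof. by rewrite double_gt0. Qed.

Lemma ownerE t q : (t <= k)%N -> @owner n ham_protocol t q = alice_owns0 q (+) (q < t)%N.
Proof.
elim: t => [|t IHt] le_tk /=; first by rewrite addbF.
rewrite /sent_qubit le_tk IHt ?(ltnW le_tk) // -val_eqE /= inordK; last lia.
case: eqP => [-> | neq_qt]; first by rewrite ltnn ltnSn addbF addbT.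
by congr (_ (+) _); apply/idP/idP; lia.
Qed.

Lemma ham_protocol_valid : valid_protocol ham_protocol.
Proof.
split=> /= [i j /(congr1 val) | i j /(congr1 val) | i | j | t].
- by rewrite !xqubitE => /addnI /val_inj.
- by rewrite !yqubitE => /addnI /val_inj.
- by rewrite /alice_owns0 xqubitE ltn_add2l ltn_ord.
- by rewrite /alice_owns0 yqubitE; lia.
rewrite ltnS leq_eqVlt => /orP[/eqP -> | lt_tk].
  rewrite /round_op (negbTE (lt0n_neq0 k_gt0)) eqxx /alice_speaks /sent_qubit ltnn.
  split; first by rewrite ownerE // /alice_owns0 /= !leq_gtF //; lia.
  - exact: bob_op_unitary.
  apply: local_op_eq bob_op_local => q /=; rewrite ownerE // /alice_owns0.
  by case: (ltnP q k) => lt_qk; case: (ltnP q (k + n)) => lt_qkn /=; lia.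
rewrite /round_op /alice_speaks /sent_qubit lt_tk (ltn_eqF lt_tk).
split.
- by rewrite ownerE ?(ltnW lt_tk) // /alice_owns0 inordK; lia.
- by case: eqP => _; [exact: alice_op_unitary | exact: unitary_id].
case: eqP => [-> | _]; last exact: local_op_id.
by apply: local_op_eq alice_op_local => q /=; rewrite eqb_id.
Qed.

Hypotheses (n_le : (n <= 2 ^ k)%N) (n_even : ~~ odd n).

Section Run.
Variables x y : 'I_n -> bool.
Local Notation b0 := (init_basis ham_protocol x y).
Local Notation run := (@run n ham_protocol x y).

Lemma reg_b0 : reg b0 = [ffun=> false].
Proof.
apply/ffunP => r; rewrite [RHS]ffunE [LHS]ffunE; apply: init_basis_idle => i /=;
  rewrite -val_eqE /= ?xqubitE ?yqubitE; have := ltn_ord r; lia.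
Qed.

Lemma b0_out : b0 outq = false.
Proof.
apply: init_basis_idle => i /=;
  rewrite -val_eqE /= ?xqubitE ?yqubitE; have := ltn_ord i; lia.
Qed.

Lemma run_alice t : (0 < t <= k)%N -> run t =1 alice_op^~ b0.
Proof.
elim: t => [// | t IHt]; case: t IHt => [_ _ | t IHt /andP[_ lt_tk]] b.
  exact: apply_op_delta.
have round_id : round_op t.+1 = idop by rewrite /round_op (ltn_eqF lt_tk).
rewrite -[run t.+2 b]/(apply_op (round_op t.+1) (run t.+1) b) round_id apply_op_id.
by apply: IHt; apply: ltnW.
Qed.

Lemma run_final (b : basis m) : run k.+1 b = \sum_j bob_op b j * alice_op j b0.
Proof.
rewrite /= /apply_op /round_op (negbTE (lt0n_neq0 k_gt0)) eqxx.
by apply: eq_bigr => j _; rewrite run_alice // k_gt0 leqnn.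
Qed.

Definition overlap : CC :=
  \sum_(j | agree_off in_reg b0 j) (-1) ^+ alice_bit j * (-1) ^+ bob_bit j.

Lemma run_final_out (b : basis m) : b outq ->
  run k.+1 b = (agree_off in_reg (flip_out b) b0)%:R * (hscale * hscale) * overlap.
Proof.
move=> b_out; rewrite run_final.
have [fb_b0 | nfb_b0] := boolP (agree_off in_reg (flip_out b) b0); last first.
  rewrite !mul0r big1 // => j _; rewrite /bob_op /alice_op /hadamard.
  case fj: (agree_off _ (flip_out b) j); case jb: (agree_off _ j b0); rewrite ?mul0r ?mulr0 //.
  by move: nfb_b0; rewrite (agree_off_trans fj jb).
have reg_fb : reg (flip_out b) = [ffun=> false].
  have out_notin_reg : outq \notin in_reg by rewrite unfold_in /= -leqNgt; lia.
  move/agree_offP/(_ outq out_notin_reg): (fb_b0).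
  by rewrite reg_flip_out ffunE eqxx b_out b0_out; case: eqP.
have fj j : agree_off in_reg (flip_out b) j = agree_off in_reg b0 j.
  by apply/idP/idP; apply: agree_off_trans; rewrite // agree_offC.
rewrite /overlap mul1r mulr_sumr -[in RHS]sumr_indicator; apply: eq_bigr => j _.
rewrite /bob_op /alice_op hadamard_reg0l // hadamard_reg0r ?reg_b0 //.
rewrite fj [agree_off _ j b0]agree_offC.
case: (agree_off _ b0 j); rewrite ?mul0r ?mulr0 ?mul1r //.
by move: hscale ((-1) ^+ alice_bit j) ((-1) ^+ bob_bit j) => c sa sb; ring.
Qed.

Lemma overlapE : overlap = n%:R - (hamdist x y).*2%:R.
Proof.
pose F v : CC := if insub v : option 'I_n is Some i then (-1) ^+ (x i (+) y i) else (-1) ^+ v.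
have overlap_F (g : {ffun 'I_k -> bool}) :
    (-1) ^+ alice_bit (with_reg g b0) * (-1) ^+ bob_bit (with_reg g b0) = F (enum_rank g).
  rewrite /alice_bit /bob_bit /reg_index reg_of_with_reg /F.
  case: insubP => [i _ _ | _]; last by rewrite mulr1 signr_odd.
  rewrite !with_reg_out ?xqubitE ?yqubitE ?leq_addr -?addnA ?leq_addr //.
  by rewrite (init_basis_xpos ham_protocol_valid) (init_basis_ypos ham_protocol_valid) signr_addb.
rewrite /overlap (sum_agree_off_reg reg_fits); under eq_bigr do rewrite overlap_F.
rewrite (reindex (fun v : 'I_#|{ffun 'I_k -> bool}| => enum_val v)) /=; last first.
  by exists enum_rank => [v _ | g _]; rewrite ?enum_valK ?enum_rankK.
under eq_bigr do rewrite enum_valK.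
rewrite -(big_mkord xpredT F) card_ffun card_bool card_ord (big_cat_nat (leq0n n) n_le) /=.
rewrite [X in _ + X](eq_big_nat _ _ (F2 := fun v => (-1) ^+ v)); last first.
  by move=> v /andP[le_nv _]; rewrite /F insubN // -leqNgt.
rewrite sum_sign_nat_even // ?oddX ?negb_or ?(lt0n_neq0 k_gt0) // addr0 big_mkord.
under eq_bigr do rewrite /F valK signrE.
rewrite sumrB sumr_const card_ord -natr_sum /hamdist; under eq_bigr do rewrite -mul2n.
by rewrite -big_distrr /= mul2n.
Qed.

Lemma overlap_eq0 : (overlap == 0) = (hamdist x y == n./2).
Proof.
rewrite overlapE subr_eq0 eqr_nat; apply/eqP/eqP => [n_dbl | d_half].
  by rewrite (congr1 half n_dbl) doubleK.
by rewrite d_half even_halfK.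
Qed.

Lemma ham_accept_prob : accept_prob ham_protocol x y =
  \sum_(b : basis m | b outq)
    `|(agree_off in_reg (flip_out b) b0)%:R * (hscale * hscale) * overlap| ^+ 2.
Proof. by apply: eq_bigr => b b_out; rewrite run_final_out. Qed.

Lemma ham_protocol_correct :
  (HAM n./2 x y = false -> accept_prob ham_protocol x y = 0) /\
  (HAM n./2 x y = true -> 0 < accept_prob ham_protocol x y).
Proof.
rewrite /HAM -overlap_eq0 ham_accept_prob; split=> [/negbFE/eqP overlap0 | overlap_neq0].
  by rewrite big1 // => b _; rewrite overlap0 mulr0 normr0 expr0n.
pose bs : basis m := [ffun q => (q == outq) || b0 q].
have flip_bs : flip_out bs = b0.
  have reg_bs : reg bs = [ffun=> false].
    by rewrite -reg_b0; apply/ffunP => r; rewrite !ffunE reg_out_neq.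
  apply/ffunP => q; rewrite [flip_out _ q]ffunE [bs q]ffunE reg_bs eqxx.
  by case: eqP => [-> | _]; rewrite ?b0_out.
rewrite (bigD1 bs) /=; last by rewrite ffunE eqxx.
rewrite flip_bs agree_off_refl mul1r ltr_pwDl ?exprn_gt0 ?normr_gt0 ?mulf_neq0 ?hscale_neq0 //.
by apply: sumr_ge0 => b _; rewrite exprn_ge0.
Qed.

End Run.

Lemma ham_protocol_nondet : nondet_computes ham_protocol (@HAM n n./2).
Proof. by split=> [|x y]; [exact: ham_protocol_valid | exact: ham_protocol_correct]. Qed.

End HammingProtocol.

Theorem theorem5p4 :
  exists (C N0 : nat), forall n : nat, (N0 <= n)%N -> ~~ odd n ->
    NQC_le (@HAM n n./2) (C * trunc_log 2 n)%N.
Proof.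
exists 3%N, 2%N => n le2n ev_n; set t := trunc_log 2 n.
have t_gt0 : (0 < t)%N by rewrite trunc_log_gt0.
have n_le : (n <= 2 ^ t.*2)%N.
  apply: leq_trans (ltnW (@trunc_log_ltn 2 n isT)) _.
  by rewrite leq_pexp2l //; lia.
exists (ham_protocol n t); split; first exact: ham_protocol_nondet.
by rewrite ham_protocol_cost; lia.
Qed.
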